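(* Let $1\le k\le n-1$ and $I,J\in V_{k,n}$. For $i\in\mathbb{Z}$ let $I^{+i}$ denote the image of $I$ under $x\mapsto x+i$ with values taken modulo $n$ in $\{1,\dots,n\}$ (re-sorted to an increasing vector). Then: (1) if $I$ and $J$ are weakly separated, then they are noncrossing; (2) if $I^{+i}$ and $J^{+i}$ are noncrossing for every $i\in[n]$, then $I$ and $J$ are weakly separated. Consequently the weak separation complex $\Delta^{Sep}_{k,n}$ equals the intersection over $i\in[n]$ of the images of $\Delta^{NC}_{k,n}$ under the cyclic shift by $i$.
   Context: $V_{k,n}$ denotes the set of integer vectors $I=(i_1,\dots,i_k)$ with $1\le i_1<\dots<i_k\le n$, identified with $k$-subsets of $[n]$. Two arcs $(p<p')$, $(q<q')$ cross if $p<q<p'<q'$ or $q<p<q'<p'$. $I,J\in V_{k,n}$ are noncrossing if for all $1\le a<b\le k$ with $i_\ell=j_\ell$ for all $a<\ell<b$, the arcs $(i_a<i_b)$ and $(j_a<j_b)$ do not cross. $\Delta^{NC}_{k,n}$ is the flag simplicial complex on $V_{k,n}$ whose faces are the sets of pairwise noncrossing vectors. $I,J\in V_{k,n}$ are weakly separated if, placing $1,\dots,n$ as the vertices of a convex $n$-gon in cyclic order, the convex hulls of $I\setminus J$ and $J\setminus I$ are disjoint. $\Delta^{Sep}_{k,n}$ is the simplicial complex on $V_{k,n}$ whose faces are the sets of pairwise weakly separated vectors. *)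

From HB Require Import structures.
From mathcomp Require Import all_boot all_order all_algebra.
Set Implicit Arguments. Unset Strict Implicit. Unset Printing Implicit Defensive.
Import Order.TTheory GRing.Theory Num.Theory.

(* Conventions: [n] = {1,...,n} is modelled by 'I_n, the ordinal x : 'I_n
   standing for the integer x+1.  A k-subset I of [n] is a set
   I : {set 'I_n} with #|I| = k; its increasing vector is [vec I]. *)

Definition inV (k n : nat) (I : {set 'I_n}) : bool := #|I| == k.

Definition vec (n : nat) (I : {set 'I_n}) : seq nat :=
  sort leq [seq (val x).+1 | x in I].

Definition vnth (v : seq nat) (l : nat) : nat := nth 0%N v l.-1.

Definition cross (p p' q q' : nat) : bool :=
  ((p < q) && (q < p') && (p' < q'))%N || ((q < p) && (p < q') && (q' < p'))%N.

Definition noncrossing (k n : nat) (I J : {set 'I_n}) : Prop :=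
  forall a b : nat, (1 <= a)%N -> (a < b)%N -> (b <= k)%N ->
    (forall l : nat, (a < l)%N -> (l < b)%N -> vnth (vec I) l = vnth (vec J) l) ->
    ~~ cross (vnth (vec I) a) (vnth (vec I) b) (vnth (vec J) a) (vnth (vec J) b).

(* The vertex labelled j = x+1 is placed at the point (j, j^2) of the
   parabola; these n points are the vertices of a convex n-gon whose
   cyclic order is 1,2,...,n. *)
Definition px (n : nat) (x : 'I_n) : rat := ((val x).+1)%:R.
Definition py (n : nat) (x : 'I_n) : rat := (((val x).+1) ^ 2)%:R.

Definition in_hull (n : nat) (S : {set 'I_n}) (u v : rat) : Prop :=
  exists lam : 'I_n -> rat,
    [/\ forall x, (0 <= lam x)%R,
        forall x, x \notin S -> lam x = 0,
        \sum_x lam x = 1,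
        u = \sum_x lam x * px x &
        v = \sum_x lam x * py x]%R.

Definition weakly_separated (n : nat) (I J : {set 'I_n}) : Prop :=
  forall u v : rat, ~ (in_hull (I :\: J) u v /\ in_hull (J :\: I) u v).

Lemma ord_pos (n : nat) (x : 'I_n) : (0 < n)%N.
Proof. exact: leq_ltn_trans (leq0n x) (ltn_ord x). Qed.

Definition shift (n i : nat) (x : 'I_n) : 'I_n :=
  Ordinal (ltn_pmod (val x + i) (ord_pos x)).

Definition shiftset (n i : nat) (I : {set 'I_n}) : {set 'I_n} :=
  [set shift i x | x in I].

Definition NC_face (k n : nat) (F : {set {set 'I_n}}) : Prop :=
  (forall I, I \in F -> inV k I) /\
  (forall I J, I \in F -> J \in F -> noncrossing k I J).

Definition Sep_face (k n : nat) (F : {set {set 'I_n}}) : Prop :=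
  (forall I, I \in F -> inV k I) /\
  (forall I J, I \in F -> J \in F -> weakly_separated I J).

Definition shifted_NC_face (k n i : nat) (F : {set {set 'I_n}}) : Prop :=
  exists G : {set {set 'I_n}}, NC_face k G /\ F = [set shiftset i I | I in G].

From HB Require Import structures.
From mathcomp Require Import all_boot all_order all_algebra.
From mathcomp Require Import zify ring lra.
Set Implicit Arguments. Unset Strict Implicit. Unset Printing Implicit Defensive.

(** A k-subset I is encoded by its counting function [nbelow I x], the number of
    elements of I below x; the l-th entry of the increasing vector of I is the least
    threshold x with [l <= nbelow I x].  Since the vertices sit on the parabola
    y = x^2, the hulls of I \ J and J \ I meet exactly when these two sets interleave
    (a < b < c < d alternately): interleaving gives two crossing chords, and otherwise
    the quadratic (X - P)(X - Q) separates the two hulls.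

    (1) If the vectors of I and J cross at positions a < b, comparing the counting
    functions of I and J at four thresholds exhibits an interleaving.
    (2) Interleaving is invariant under cyclic shifts.  Rotate so that the origin
    minimises nbelow I - nbelow J; then this difference is nonnegative, and an
    interleaving yields s in J \ I followed by t in I \ J with I and J agreeing strictly
    between them and the difference positive at s.  A second rotation bringing the
    difference at s down to exactly 1 makes the vectors cross at the rank of s in J
    and the rank of t in I.
    (3) Follows from (1), (2) and the shift invariance of weak separation. *)

(** * Counting functions and increasing vectors *)

Section Counting.
Variable n : nat.
Implicit Types (I J : {set 'I_n}) (x y : nat).

Definition nbelow I x : nat := #|[set z in I | val z < x]|.

Lemma nbelow0 I : nbelow I 0 = 0.
Proof. by apply: eq_card0 => z; rewrite !inE ltn0 andbF. Qed.

Lemma nbelow_ge I x : n <= x -> nbelow I x = #|I|.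
Proof. by move=> le_nx; apply: eq_card => z; rewrite !inE (leq_trans (ltn_ord z) le_nx) andbT. Qed.

Lemma leq_nbelow I : {homo nbelow I : x y / x <= y}.
Proof.
move=> x y le_xy; apply/subset_leq_card/subsetP => z; rewrite !inE.
by case/andP=> -> lt_zx; exact: leq_trans lt_zx le_xy.
Qed.

Lemma nbelow_le_card I x : nbelow I x <= #|I|.
Proof. by apply/subset_leq_card/subsetP => z; rewrite inE => /andP[]. Qed.

Lemma nbelowD I x y : x <= y ->
  nbelow I y = nbelow I x + #|[set z in I | x <= val z < y]|.
Proof.
move=> le_xy; rewrite /nbelow -(cardsID [set z : 'I_n | val z < x] [set z in I | val z < y]).
congr (_ + _); apply: eq_card => z; rewrite !inE.
- by case: (ltnP (val z) x) => [lt_zx|_]; rewrite ?andbF // (leq_trans lt_zx le_xy) andbT.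
- by rewrite -leqNgt andbCA.
Qed.

Lemma nbelowS I (z : 'I_n) : nbelow I (val z).+1 = nbelow I (val z) + (z \in I).
Proof.
rewrite (nbelowD _ (leqnSn _)); congr (_ + _).
have -> : [set y in I | val z <= val y < (val z).+1] = if z \in I then [set z] else set0.
  apply/setP => y; rewrite inE ltnS -eqn_leq (inj_eq val_inj).
  case: (eqVneq y z) => [->|ne_yz]; case: (z \in I); rewrite ?inE ?eqxx ?andbF //.
  by rewrite (negbTE ne_yz).
by case: (z \in I); rewrite ?cards1 ?cards0.
Qed.

Lemma nbelow_step I x : nbelow I x.+1 <= (nbelow I x).+1.
Proof.
case: (ltnP x n) => [lt_xn | le_nx]; last by rewrite !nbelow_ge ?(leqW le_nx).
by rewrite (nbelowS I (Ordinal lt_xn)) -addn1 leq_add2l leq_b1.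
Qed.

Lemma nbelow_gain I J x y : x <= y ->
  nbelow I x + nbelow J y < nbelow I y + nbelow J x ->
  exists z : 'I_n, [/\ x <= val z < y, z \in I & z \notin J].
Proof.
move=> le_xy; rewrite !(nbelowD _ le_xy) => gain.
have /subsetPn[z] : ~~ ([set z in I | x <= val z < y] \subset [set z in J | x <= val z < y]).
  by apply/negP => /subset_leq_card; lia.
by rewrite !inE => /andP[z_I z_xy] /nandP[z_J|/negP//]; exists z.
Qed.

Lemma nbelow_eq_between I J x y : x <= y ->
  (forall z : 'I_n, x <= val z < y -> (z \in I) = (z \in J)) ->
  nbelow I x + nbelow J y = nbelow I y + nbelow J x.
Proof.
move=> le_xy eqIJ; rewrite !(nbelowD _ le_xy).
suff -> : #|[set z in I | x <= val z < y]| = #|[set z in J | x <= val z < y]| by lia.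
apply: eq_card => z; rewrite !inE.
by case: (boolP (x <= val z < y)) => [/eqIJ->|]; rewrite ?andbF.
Qed.

End Counting.

Lemma sorted_nth_leq (s : seq nat) a x : sorted leq s -> a < size s ->
  (nth 0 s a <= x) = (a < count (fun m => m <= x) s).
Proof.
elim: s a => [|h s IHs] a //= sorted_hs.
have h_min : all (leq h) s := order_path_min leq_trans sorted_hs.
have [le_hx | lt_xh] := leqP h x; last first.
  have -> : count (fun m => m <= x) s = 0.
    apply/eqP; rewrite -leqn0 leqNgt -has_count; apply/hasPn => m m_s.
    by rewrite -ltnNge (leq_trans lt_xh) //; move/allP: h_min; apply.
  case: a => [|a] /= lt_as; first by rewrite leqNgt lt_xh.
  apply/negbTE; rewrite -ltnNge; apply: leq_trans lt_xh _.
  by move/allP: h_min; apply; rewrite mem_nth.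
case: a => [|a] lt_a /=; first by rewrite le_hx.
by rewrite IHs ?(path_sorted sorted_hs).
Qed.

Section Vectors.
Variable n : nat.
Implicit Types (I J : {set 'I_n}) (x : nat).

Lemma vec_sorted I : sorted leq (vec I).
Proof. exact: (sort_sorted leq_total). Qed.

Lemma vec_ltn_sorted I : sorted ltn (vec I).
Proof.
rewrite ltn_sorted_uniq_leq vec_sorted sort_uniq andbT.
by rewrite map_inj_uniq ?enum_uniq // => y z /succn_inj/val_inj.
Qed.

Lemma size_vec I : size (vec I) = #|I|.
Proof. by rewrite size_sort size_map -cardE. Qed.

Lemma count_vec I x : count (fun m => m <= x) (vec I) = nbelow I x.
Proof.
rewrite /vec /nbelow count_sort count_map cardE /enum_mem size_filter count_filter.
by apply: eq_count => z; rewrite !inE andbC.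
Qed.

Lemma vnth_leq I a x : 0 < a <= #|I| ->
  (vnth (vec I) a <= x) = (a <= nbelow I x).
Proof.
case: a => // a /= lt_a; rewrite /vnth /= sorted_nth_leq ?count_vec ?size_vec //.
exact: vec_sorted.
Qed.

Lemma vnth_ltn I a b : 0 < a < b -> b <= #|I| -> vnth (vec I) a < vnth (vec I) b.
Proof.
case/andP=> a_gt0 lt_ab le_bI; rewrite /vnth.
apply: (sorted_ltn_nth ltn_trans 0 (vec_ltn_sorted I)); rewrite ?inE ?size_vec //;
  lia.
Qed.

Lemma nbelow_lt_card I (z : 'I_n) : z \in I -> nbelow I (val z) < #|I|.
Proof.
by move=> z_I; have := nbelow_le_card I (val z).+1; rewrite nbelowS z_I addn1.
Qed.

Lemma vnth_nbelow I (z : 'I_n) : z \in I ->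
  vnth (vec I) (nbelow I (val z)).+1 = (val z).+1.
Proof.
move=> z_I; have rank_z : 0 < (nbelow I (val z)).+1 <= #|I| by exact: nbelow_lt_card.
apply/eqP; rewrite eqn_leq (vnth_leq _ rank_z) nbelowS z_I addn1 leqnn /=.
by rewrite ltnNge (vnth_leq _ rank_z) ltnn.
Qed.

Lemma eq_vnth I J l : 0 < l -> l <= #|I| -> l <= #|J| ->
  (forall x, (l <= nbelow I x) = (l <= nbelow J x)) ->
  vnth (vec I) l = vnth (vec J) l.
Proof.
move=> l_gt0 le_lI le_lJ eq_IJ.
have l_I : 0 < l <= #|I| by rewrite l_gt0.
have l_J : 0 < l <= #|J| by rewrite l_gt0.
apply/eqP; rewrite eqn_leq (vnth_leq _ l_I) eq_IJ -(vnth_leq _ l_J) leqnn /=.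
by rewrite (vnth_leq _ l_J) -eq_IJ -(vnth_leq _ l_I).
Qed.

End Vectors.

Definition alternating n (S T : {set 'I_n}) : Prop :=
  exists a b c d : 'I_n, [/\ a \in S, b \in T, c \in S, d \in T &
    [/\ val a < val b, val b < val c & val c < val d]].

Lemma crossing_alternating k n (I J : {set 'I_n}) a b :
  #|I| = k -> #|J| = k -> 0 < a -> a < b -> b <= k ->
  (forall l, a < l -> l < b -> vnth (vec I) l = vnth (vec J) l) ->
  vnth (vec I) a < vnth (vec J) a -> vnth (vec J) a < vnth (vec I) b ->
  vnth (vec I) b < vnth (vec J) b ->
  alternating (I :\: J) (J :\: I).
Proof.
move=> cardI cardJ a_gt0 lt_ab le_bk mid.
set Ia := vnth (vec I) a; set Ja := vnth (vec J) a.
set Ib := vnth (vec I) b; set Jb := vnth (vec J) b => lt_IJa lt_JaIb lt_IJb.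
have aI : 0 < a <= #|I| by rewrite a_gt0 cardI; lia.
have aJ : 0 < a <= #|J| by rewrite a_gt0 cardJ; lia.
have bI : 0 < b <= #|I| by rewrite cardI; lia.
have bJ : 0 < b <= #|J| by rewrite cardJ; lia.
have b1J : 0 < b.-1 <= #|J| by rewrite cardJ; lia.
have I_Ia : a <= nbelow I Ia by rewrite -vnth_leq.
have J_Ia : nbelow J Ia < a by rewrite ltnNge -vnth_leq // -ltnNge.
have J_Ib : b.-1 <= nbelow J Ib.-1.
  rewrite -vnth_leq // -ltnS prednK; last by apply: leq_ltn_trans lt_JaIb.
  have [-> // | ne_ab1] := eqVneq b.-1 a.
  by rewrite -mid ?vnth_ltn ?cardI //; lia.
have I_Ib : nbelow I Ib.-1 < b by rewrite ltnNge -vnth_leq // -ltnNge; lia.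
have I_Jb : b <= nbelow I Jb.-1 by rewrite -vnth_leq //; lia.
have J_Jb : nbelow J Jb.-1 < b by rewrite ltnNge -vnth_leq // -ltnNge; lia.
have Jb_n : Jb <= n by rewrite vnth_leq // nbelow_ge // cardJ; lia.
(* Alternating strict gains of one counting function over the other on
   [0, Ia), [Ia, Ib - 1), [Ib - 1, Jb - 1) and [Jb - 1, n). *)
have [z1 [/andP[_ z1_lt] z1_I z1_J]] := @nbelow_gain _ I J 0 Ia
  (leq0n Ia) ltac:(rewrite !nbelow0; lia).
have [z2 [/andP[z2_ge z2_lt] z2_J z2_I]] := @nbelow_gain _ J I Ia Ib.-1
  ltac:(lia) ltac:(lia).
have [z3 [/andP[z3_ge z3_lt] z3_I z3_J]] := @nbelow_gain _ I J Ib.-1 Jb.-1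
  ltac:(lia) ltac:(lia).
have [z4 [/andP[z4_ge _] z4_J z4_I]] := @nbelow_gain _ J I Jb.-1 n
  ltac:(lia) ltac:(rewrite !(nbelow_ge _ (leqnn n)); lia).
exists z1, z2, z3, z4; rewrite !inE z1_I z1_J z2_I z2_J z3_I z3_J z4_I z4_J.
split => //; split; lia.
Qed.

(** * Weak separation as non-interleaving *)

Section ParabolaHulls.
Import Order.TTheory GRing.Theory Num.Theory.
Local Open Scope ring_scope.

Lemma parabola_chords_meet (R : realFieldType) (A B C D : R) :
  A < B -> B < C -> C < D ->
  exists al be al' be' : R, [/\ 0 <= al, 0 <= be, 0 <= al', 0 <= be' &
   [/\ al + be = 1, al' + be' = 1, al * A + be * C = al' * B + be' * D &
       al * A ^+ 2 + be * C ^+ 2 = al' * B ^+ 2 + be' * D ^+ 2]].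
Proof.
move=> lt_AB lt_BC lt_CD.
have CA_gt0 : 0 < C - A by lra.
have DB_gt0 : 0 < D - B by lra.
have E_gt0 : 0 < B + D - A - C by lra.
exists ((C - B) * (D - C) / ((C - A) * (B + D - A - C))),
       ((B - A) * (D - A) / ((C - A) * (B + D - A - C))),
       ((D - A) * (D - C) / ((D - B) * (B + D - A - C))),
       ((B - A) * (C - B) / ((D - B) * (B + D - A - C))).
split; try by apply: divr_ge0; apply: mulr_ge0; lra.
by split; field; rewrite ?gt_eqF.
Qed.

Variable n : nat.
Implicit Types (S T : {set 'I_n}) (u v : rat).

Lemma py_px (x : 'I_n) : py x = px x ^+ 2.
Proof. by rewrite /py /px natrX. Qed.

Lemma sum_indicator2 (a c : 'I_n) (al be : rat) (f : 'I_n -> rat) :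
  \sum_x ((x == a)%:R * al + (x == c)%:R * be) * f x = al * f a + be * f c.
Proof.
have pick (e : 'I_n) (g : 'I_n -> rat) : \sum_x (x == e)%:R * g x = g e.
  by rewrite (bigD1 e) //= eqxx mul1r big1 ?addr0 // => x /negbTE->; rewrite mul0r.
rewrite -(pick a (fun x => al * f x)) -(pick c (fun x => be * f x)) -big_split /=.
by apply: eq_bigr => x _; ring.
Qed.

Lemma in_hull_pair S (a c : 'I_n) (al be : rat) :
  a \in S -> c \in S -> 0 <= al -> 0 <= be -> al + be = 1 ->
  in_hull S (al * px a + be * px c) (al * px a ^+ 2 + be * px c ^+ 2).
Proof.
move=> a_S c_S al_ge0 be_ge0 sum1.
exists (fun x => (x == a)%:R * al + (x == c)%:R * be); split.
- by move=> x; apply: addr_ge0; apply: mulr_ge0.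
- move=> x x_S; have ne_xa : x != a by apply: contraNneq x_S => ->.
  have ne_xc : x != c by apply: contraNneq x_S => ->.
  by rewrite (negbTE ne_xa) (negbTE ne_xc) !mul0r addr0.
- transitivity (\sum_x ((x == a)%:R * al + (x == c)%:R * be) * 1).
    by apply: eq_bigr => x _; rewrite mulr1.
  by rewrite sum_indicator2 !mulr1.
- by rewrite sum_indicator2.
- rewrite -(sum_indicator2 a c al be (fun x => px x ^+ 2)).
  by apply: eq_bigr => x _; rewrite py_px.
Qed.

Lemma alternating_hulls_meet S T : alternating S T ->
  exists u v, in_hull S u v /\ in_hull T u v.
Proof.
move=> [a [b [c [d [a_S b_T c_S d_T [lt_ab lt_bc lt_cd]]]]]].
have px_lt (x y : 'I_n) : (val x < val y)%N -> px x < px y.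
  by move=> lt_xy; rewrite /px ltr_nat ltnS.
have [al [be [al' [be' [al0 be0 al'0 be'0 [s1 s2 eu ev]]]]]] :=
  parabola_chords_meet (px_lt _ _ lt_ab) (px_lt _ _ lt_bc) (px_lt _ _ lt_cd).
exists (al * px a + be * px c), (al * px a ^+ 2 + be * px c ^+ 2).
by split; [|rewrite eu ev]; apply: in_hull_pair.
Qed.

Lemma in_hull_nonempty S u v : in_hull S u v -> exists x, x \in S.
Proof.
move=> [lam [_ lam0 sum1 _ _]]; case: (set_0Vmem S) => [S0|[x x_S]]; last by exists x.
have : \sum_x lam x = 0 by apply: big1 => x _; rewrite lam0 // S0 inE.
by rewrite sum1 => /eqP; rewrite oner_eq0.
Qed.

(* [(X - P)(X - Q)] is affine on the parabola, hence commutes with convex combinations. *)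
Lemma in_hull_quadratic S (P Q u v : rat) : in_hull S u v ->
  exists lam : 'I_n -> rat, [/\ forall x, 0 <= lam x, forall x, x \notin S -> lam x = 0,
    \sum_x lam x = 1 &
    v - (P + Q) * u + P * Q = \sum_x lam x * ((px x - P) * (px x - Q))].
Proof.
move=> [lam [lam_ge0 lam0 sum1 -> ->]]; exists lam; split => //.
rewrite [RHS](eq_bigr (fun x => lam x * py x - ((P + Q) * (lam x * px x) - P * Q * lam x))).
  by rewrite !sumrB -!mulr_sumr sum1; ring.
by move=> x _; rewrite py_px; ring.
Qed.

Lemma hulls_disjoint_interval S T (p q : nat) : (p <= q)%N ->
  (forall x : 'I_n, x \in S -> (p <= val x <= q)%N) ->
  (forall x : 'I_n, x \in T -> (val x < p)%N \/ (q < val x)%N) ->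
  forall u v, in_hull S u v -> in_hull T u v -> False.
Proof.
move=> le_pq S_in T_out u v hull_S hull_T.
set P : rat := (p.+1)%:R; set Q : rat := (q.+1)%:R.
have le_PQ : P <= Q by rewrite ler_nat.
have [lS [lS_ge0 lS0 _ eS]] := in_hull_quadratic P Q hull_S.
have [lT [lT_ge0 lT0 sumT eT]] := in_hull_quadratic P Q hull_T.
have : v - (P + Q) * u + P * Q <= 0.
  rewrite eS; apply: sumr_le0 => x _.
  case: (boolP (x \in S)) => [x_S|x_S]; last by rewrite lS0 ?mul0r.
  apply: mulr_ge0_le0 => //; have /andP[le_px le_xq] := S_in x x_S.
  by apply: mulr_ge0_le0; rewrite ?subr_ge0 ?subr_le0 /px ler_nat ltnS.
suff : 1 <= v - (P + Q) * u + P * Q by lra.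
rewrite eT -sumT; apply: ler_sum => x _.
case: (boolP (x \in T)) => [x_T|x_T]; last by rewrite lT0 ?mul0r.
rewrite -{1}[lT x]mulr1; apply: ler_wpM2l => //.
case: (T_out x x_T) => [lt_xp | lt_qx].
- have : px x + 1 <= P by rewrite /px /P natr1 ler_nat ltnS.
  nra.
- have : Q + 1 <= px x by rewrite /px /Q natr1 ler_nat ltnS.
  nra.
Qed.

End ParabolaHulls.

Definition interleaved n (S T : {set 'I_n}) : Prop := alternating S T \/ alternating T S.

Section HullsMeet.
Variable n : nat.
Implicit Types (S T : {set 'I_n}) (u v : rat).

Lemma hulls_meet_between S T u v : [disjoint S & T] ->
  in_hull S u v -> in_hull T u v ->
  exists p q y : 'I_n, [/\ p \in S, q \in S, y \in T, val p < val y & val y < val q].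
Proof.
move=> disj_ST hull_S hull_T.
have [x0 x0_S] := in_hull_nonempty hull_S.
case: (@arg_minnP _ x0 (mem S) val x0_S) => p p_S p_min.
case: (@arg_maxnP _ x0 (mem S) val x0_S) => q q_S q_max.
have [/existsP[y /and3P[y_T lt_py lt_yq]] | no_between] :=
  boolP [exists y in T, val p < val y < val q]; first by exists p, q, y.
exfalso; apply: (hulls_disjoint_interval (q_max p p_S) _ _ hull_S hull_T).
  by move=> x x_S; rewrite p_min //; exact: q_max.
move=> y y_T; have y_S : y \notin S by rewrite (disjointFl disj_ST y_T).
have [ne_yp ne_yq] : y != p /\ y != q by split; apply: contraNneq y_S => ->.
case: (ltnP (val y) (val p)) => [|le_py]; first by left.
case: (ltnP (val q) (val y)) => [|le_yq]; first by right.
case/negP: no_between; apply/existsP; exists y.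
by rewrite y_T !ltn_neqAle le_py le_yq !(inj_eq val_inj) eq_sym ne_yp ne_yq.
Qed.

Lemma hulls_meet_interleaved S T u v : [disjoint S & T] ->
  in_hull S u v -> in_hull T u v -> interleaved S T.
Proof.
move=> disj_ST hull_S hull_T.
have [p [q [y [p_S q_S y_T lt_py lt_yq]]]] := hulls_meet_between disj_ST hull_S hull_T.
have [p' [q' [x [p'_T q'_T x_S lt_p'x lt_xq']]]] :=
  hulls_meet_between (etrans (disjoint_sym _ _) disj_ST) hull_T hull_S.
case: (ltngtP (val x) (val y)) => [lt_xy | lt_yx | /val_inj eq_xy].
- by right; exists p', x, y, q.
- by left; exists p, y, x, q'.
- by move: (disjointFr disj_ST x_S); rewrite eq_xy y_T.
Qed.

Lemma disjoint_setD_swap (I J : {set 'I_n}) : [disjoint I :\: J & J :\: I].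
Proof. by rewrite disjoints_subset; apply/subsetP => x; rewrite !inE => /andP[_ ->]. Qed.

Lemma weakly_separatedP (I J : {set 'I_n}) :
  weakly_separated I J <-> ~ interleaved (I :\: J) (J :\: I).
Proof.
split=> [ws_IJ [] /alternating_hulls_meet [u [v [hull1 hull2]]] |
         not_il u v [hull1 hull2]].
- exact: (ws_IJ u v).
- exact: (ws_IJ u v).
exact/not_il/(hulls_meet_interleaved (disjoint_setD_swap I J) hull1 hull2).
Qed.
End HullsMeet.

Lemma weakly_separated_noncrossing k n (I J : {set 'I_n}) :
  inV k I -> inV k J -> weakly_separated I J -> noncrossing k I J.
Proof.
move=> /eqP cardI /eqP cardJ /weakly_separatedP not_il a b a_gt0 lt_ab le_bk mid.
apply/negP; case/orP=> /andP[/andP[lt1 lt2] lt3]; apply: not_il.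
- by left; apply: (crossing_alternating cardI cardJ a_gt0 lt_ab le_bk mid).
- right; apply: (crossing_alternating cardJ cardI a_gt0 lt_ab le_bk) => // l l_a l_b.
  by rewrite mid.
Qed.

(** * Cyclic shifts *)

Section Shift.
Variable n : nat.
Implicit Types (I J S T : {set 'I_n}) (i j : nat).

Lemma val_shift i (x : 'I_n) : val (shift i x) = (val x + i) %% n.
Proof. by []. Qed.

Lemma shift_inj i : injective (@shift n i).
Proof.
move=> x y /(congr1 val)/eqP /=; rewrite eqn_modDr !modn_small ?ltn_ord //.
by move/eqP/val_inj.
Qed.

Lemma mem_shift i I (x : 'I_n) : (shift i x \in shiftset i I) = (x \in I).
Proof. exact/mem_imset/shift_inj. Qed.

Lemma card_shiftset i I : #|shiftset i I| = #|I|.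
Proof. exact/card_imset/shift_inj. Qed.

Lemma shiftset_comp i j I : shiftset i (shiftset j I) = shiftset (j + i) I.
Proof.
rewrite /shiftset -imset_comp; apply: eq_imset => x; apply: val_inj => /=.
by rewrite modnDml addnA.
Qed.

Lemma shiftset_mod i j I : i = j %[mod n] -> shiftset i I = shiftset j I.
Proof.
by move=> eq_ij; apply: eq_imset => x; apply: val_inj; rewrite /= -modnDmr eq_ij modnDmr.
Qed.

Lemma shiftset_id i I : i = 0 %[mod n] -> shiftset i I = I.
Proof.
move=> /(shiftset_mod I)->; rewrite /shiftset -[RHS]imset_id; apply: eq_imset => x.
by apply: val_inj; rewrite /= addn0 modn_small.
Qed.

Lemma shiftsetD i I J : shiftset i (I :\: J) = shiftset i I :\: shiftset i J.
Proof.
apply/setP => z; rewrite inE; apply/imsetP/andP => [[y y_IJ ->] | [z_J /imsetP[y y_I def_z]]].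
  by move: y_IJ; rewrite inE !mem_shift => /andP.
by exists y => //; rewrite inE y_I andbT -(mem_shift i) -def_z.
Qed.

Lemma alternating_shift1 S T : alternating S T ->
  interleaved (shiftset 1 S) (shiftset 1 T).
Proof.
move=> [a [b [c [d [a_S b_T c_S d_T [lt_ab lt_bc lt_cd]]]]]].
have val_shift1 (x : 'I_n) : (val x).+1 < n -> val (shift 1 x) = (val x).+1.
  by move=> lt_xn; rewrite val_shift addn1 modn_small.
have d_n : val d < n := ltn_ord d.
have va := val_shift1 a ltac:(lia); have vb := val_shift1 b ltac:(lia).
have vc := val_shift1 c ltac:(lia).
case: (ltnP (val d).+1 n) => [lt_dn | le_nd].
  left; exists (shift 1 a), (shift 1 b), (shift 1 c), (shift 1 d).
  by rewrite !mem_shift va vb vc val_shift1 //; split => //; split; lia.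
have vd : val (shift 1 d) = 0 by rewrite val_shift addn1 (_ : (val d).+1 = n) ?modnn //; lia.
right; exists (shift 1 d), (shift 1 a), (shift 1 b), (shift 1 c).
by rewrite !mem_shift va vb vc vd; split => //; split; lia.
Qed.

Lemma interleaved_shift i S T : interleaved S T ->
  interleaved (shiftset i S) (shiftset i T).
Proof.
elim: i => [|i IHi] il_ST; first by rewrite !shiftset_id.
rewrite -addn1 -!shiftset_comp.
by case: (IHi il_ST) => /alternating_shift1 [] ?; [left | right | right | left].
Qed.

Lemma val_shift_sub r (y : 'I_n) : r <= n ->
  val (shift (n - r) y) = if r <= val y then val y - r else val y + (n - r).
Proof.
move=> le_rn; have y_n : val y < n := ltn_ord y; rewrite val_shift.
case: (leqP r (val y)) => [le_ry | lt_yr]; last by rewrite modn_small //; lia.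
by rewrite (_ : val y + (n - r) = val y - r + n) ?modnDr ?modn_small //; lia.
Qed.

Lemma nbelow_shiftset i I x :
  nbelow (shiftset i I) x = #|[set y in I | val (shift i y) < x]|.
Proof.
rewrite /nbelow -[RHS](card_imset _ (@shift_inj i)); apply: eq_card => z; rewrite !inE.
apply/andP/imsetP => [[/imsetP[y y_I ->] lt_zx] | [y]]; first by exists y; rewrite // inE y_I.
by rewrite inE => /andP[y_I lt_yx] ->; rewrite mem_shift.
Qed.

Lemma nbelow_rot r I x : r <= n -> x <= n - r ->
  nbelow (shiftset (n - r) I) x + nbelow I r = nbelow I (r + x).
Proof.
move=> le_rn le_x; rewrite nbelow_shiftset (nbelowD I (leq_addr x r)) addnC.
congr (_ + _); apply: eq_card => -[y y_n]; rewrite !inE val_shift_sub //=.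
by case: (_ \in I) => //=; case: (leqP r y) => /=; lia.
Qed.

Lemma nbelow_rot_wrap r I x : r <= n -> n - r <= x <= n ->
  nbelow (shiftset (n - r) I) x + nbelow I r = #|I| + nbelow I (x + r - n).
Proof.
move=> le_rn /andP[le_x le_xn]; rewrite -(nbelow_ge I (leqnn n)) (nbelowD I le_rn).
rewrite (nbelowD I (_ : x + r - n <= r)); last by lia.
suff -> : nbelow (shiftset (n - r) I) x =
    nbelow I (x + r - n) + #|[set y in I | r <= val y < n]| by lia.
rewrite nbelow_shiftset -(cardsID [set y : 'I_n | val y < r]).
by congr (_ + _); apply: eq_card => -[y y_n]; rewrite !inE val_shift_sub //=;
  case: (_ \in I) => //=; case: (leqP r y) => /=; lia.
Qed.

End Shift.

Definition shifts_noncrossing k n (I J : {set 'I_n}) : Prop :=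
  forall i, 1 <= i <= n -> noncrossing k (shiftset i I) (shiftset i J).

Lemma shifts_noncrossing_shift k n (I J : {set 'I_n}) j :
  shifts_noncrossing k I J -> shifts_noncrossing k (shiftset j I) (shiftset j J).
Proof.
move=> nc_IJ i /andP[i_gt0 le_in]; rewrite !shiftset_comp.
have m_lt : (j + i) %% n < n by rewrite ltn_mod; lia.
have eq_mod : j + i = (if (j + i) %% n == 0 then n else (j + i) %% n) %[mod n].
  by case: eqP => [->|_]; rewrite ?modnn ?modn_mod.
rewrite !(shiftset_mod _ eq_mod); apply: nc_IJ.
by case: eqP => [_|/eqP]; rewrite ?leqnn ?(ltnW m_lt); lia.
Qed.

Lemma shifts_noncrossing_self k n (I J : {set 'I_n}) : 0 < n ->
  shifts_noncrossing k I J -> noncrossing k I J.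
Proof.
move=> n_gt0 nc_IJ; have := nc_IJ n; rewrite n_gt0 leqnn !shiftset_id ?modnn ?mod0n //.
exact.
Qed.

(** * Noncrossing under all shifts implies weak separation *)

Section Valley.
Variable n : nat.
Implicit Types (I J : {set 'I_n}) (x : nat).

(* The vectors cross at the positions a = rank of s in J and b = rank of t in I. *)
Lemma valley_crossing k I J (s t : 'I_n) :
  #|I| = k -> #|J| = k -> s \in J -> s \notin I -> t \in I -> t \notin J ->
  val s < val t ->
  (forall z : 'I_n, val s < val z < val t -> (z \in I) = (z \in J)) ->
  nbelow I (val s) = (nbelow J (val s)).+1 ->
  ~ noncrossing k I J.
Proof.
move=> cardI cardJ s_J s_I t_I t_J lt_st mid I_s nc_IJ.
have I_s1 : nbelow I (val s).+1 = nbelow I (val s) by rewrite nbelowS (negbTE s_I) addn0.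
have J_s1 : nbelow J (val s).+1 = (nbelow J (val s)).+1 by rewrite nbelowS s_J addn1.
have I_t1 : nbelow I (val t).+1 = (nbelow I (val t)).+1 by rewrite nbelowS t_I addn1.
have J_t1 : nbelow J (val t).+1 = nbelow J (val t) by rewrite nbelowS (negbTE t_J) addn0.
have between x : (val s).+1 <= x <= val t -> nbelow I x = nbelow J x.
  case/andP=> le_sx le_xt.
  have agree (z : 'I_n) : (val s).+1 <= val z < x -> (z \in I) = (z \in J).
    by case/andP=> lt_sz lt_zx; apply: mid; rewrite lt_sz (leq_trans lt_zx le_xt).
  by have := nbelow_eq_between le_sx agree; lia.
have J_t : nbelow J (val t) = nbelow I (val t) by rewrite between // lt_st leqnn.
have le_st : nbelow I (val s) <= nbelow I (val t) := leq_nbelow I (ltnW lt_st).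
have lt_tk : nbelow I (val t) < k by rewrite -cardI nbelow_lt_card.
set a := (nbelow J (val s)).+1; set b := (nbelow I (val t)).+1.
have aI : 0 < a <= #|I| by rewrite cardI; lia.
have bJ : 0 < b <= #|J| by rewrite cardJ; lia.
have Ia : vnth (vec I) a <= val s by rewrite vnth_leq // I_s.
have Jb : (val t).+1 < vnth (vec J) b by rewrite ltnNge vnth_leq // J_t1 J_t ltnn.
have mid_vnth l : a < l -> l < b -> vnth (vec I) l = vnth (vec J) l.
  move=> lt_al lt_lb; apply: eq_vnth; rewrite ?cardI ?cardJ; try lia.
  move=> x; have leI := @leq_nbelow _ I; have leJ := @leq_nbelow _ J.
  case: (leqP x (val s)) => [le_xs | lt_sx].
    by have := leI _ _ le_xs; have := leJ _ _ le_xs; lia.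
  case: (leqP x (val t)) => [le_xt | lt_tx]; first by rewrite between ?lt_sx.
  by have := leI _ _ lt_tx; have := leJ _ _ lt_tx; lia.
have := nc_IJ a b isT ltac:(lia) ltac:(lia) mid_vnth.
have Ja : vnth (vec J) a = (val s).+1 := vnth_nbelow s_J.
have Ib : vnth (vec I) b = (val t).+1 := vnth_nbelow t_I.
by move/negP; apply; rewrite /cross Ja Ib ltnS Ia ltnS lt_st Jb.
Qed.

Lemma valley_crossing_rot k I J (s t : 'I_n) r :
  #|I| = k -> #|J| = k -> s \in J :\: I -> t \in I :\: J ->
  r <= val s -> val s < val t ->
  (forall z : 'I_n, val s < val z < val t -> (z \in I) = (z \in J)) ->
  nbelow I (val s) + nbelow J r = (nbelow J (val s) + nbelow I r).+1 ->
  ~ noncrossing k (shiftset (n - r) I) (shiftset (n - r) J).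
Proof.
rewrite !inE => cardI cardJ /andP[s_I s_J] /andP[t_J t_I] le_rs lt_st mid rise.
have t_n : val t < n := ltn_ord t.
have le_rn : r <= n by lia.
have vs : val (shift (n - r) s) = val s - r by rewrite val_shift_sub ?le_rs.
have vt : val (shift (n - r) t) = val t - r.
  by rewrite val_shift_sub ?(ltnW (leq_ltn_trans le_rs lt_st)).
apply: (valley_crossing (s := shift (n - r) s) (t := shift (n - r) t));
  rewrite ?card_shiftset ?mem_shift ?vs ?vt //; first by lia.
  move=> z lt_szt.
  have zr_n : val z + r < n by lia.
  have -> : z = shift (n - r) (Ordinal zr_n).
    by apply: val_inj; rewrite val_shift_sub //= ifT; lia.
  by rewrite !mem_shift; apply: mid; move: lt_szt le_rs => /=; lia.
have le_sr : val s - r <= n - r by lia.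
have := nbelow_rot I le_rn le_sr; have := nbelow_rot J le_rn le_sr.
by rewrite subnKC //; lia.
Qed.

Lemma consecutive_differences I J (p q : 'I_n) :
  p \in J :\: I -> q \in I :\: J -> val p < val q ->
  exists s t : 'I_n, [/\ s \in J :\: I, t \in I :\: J, val s < val t &
    forall z : 'I_n, val s < val z < val t -> (z \in I) = (z \in J)].
Proof.
move=> p_JI q_IJ lt_pq.
case: (@arg_minnP _ q [pred z | (z \in I :\: J) && (val p < val z)] val);
  first by rewrite /= q_IJ.
move=> t /andP[t_IJ lt_pt] t_min.
case: (@arg_maxnP _ p [pred z | (z \in J :\: I) && (val z < val t)] val);
  first by rewrite /= p_JI.
move=> s /andP[s_JI lt_st] s_max.
have le_ps : val p <= val s by apply: s_max; rewrite /= p_JI.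
exists s, t; split => // z /andP[lt_sz lt_zt].
case: (boolP (z \in I)) => z_I; case: (boolP (z \in J)) => z_J //.
- have : val t <= val z by apply: t_min; rewrite /= !inE z_I z_J (leq_ltn_trans le_ps lt_sz).
  by rewrite leqNgt lt_zt.
- have : val z <= val s by apply: s_max; rewrite /= !inE z_I z_J lt_zt.
  by rewrite leqNgt lt_sz.
Qed.

Lemma nbelow_ivt I J c x : c + nbelow J x < nbelow I x ->
  exists2 r, r < x & c + nbelow J r = nbelow I r.
Proof.
elim: x => [|x IHx] above; first by move: above; rewrite !nbelow0 addn0 ltn0.
have [/IHx [r lt_rx eq_r] | le_x] := ltnP (c + nbelow J x) (nbelow I x).
  by exists r => //; apply: ltnW.
exists x => //; have := nbelow_step I x; have := @leq_nbelow _ J x x.+1 (leqnSn x); lia.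
Qed.

Lemma nbelow_argmin I J : 0 < n -> #|I| = #|J| ->
  exists2 r, r < n & forall y, y <= n -> nbelow I r + nbelow J y <= nbelow I y + nbelow J r.
Proof.
move=> n_gt0 cardIJ.
case: (@arg_minnP _ (Ordinal n_gt0) xpredT
  (fun x : 'I_n => nbelow I x + (nbelow J n - nbelow J x))) => // -[r lt_rn] _ r_min.
have min_lt y : y < n -> nbelow I r + nbelow J y <= nbelow I y + nbelow J r.
  move=> lt_yn; have := r_min (Ordinal lt_yn) isT => /=.
  by have := leq_nbelow J (ltnW lt_yn); have := leq_nbelow J (ltnW lt_rn); lia.
exists r => // y; rewrite leq_eqVlt => /orP[/eqP-> | /min_lt //].
have := min_lt 0 n_gt0; rewrite !nbelow0 !(nbelow_ge _ (leqnn n)) cardIJ; lia.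
Qed.

Lemma rotation_dominates I J r : r <= n -> #|I| = #|J| ->
  (forall y, y <= n -> nbelow I r + nbelow J y <= nbelow I y + nbelow J r) ->
  forall x, x <= n -> nbelow (shiftset (n - r) J) x <= nbelow (shiftset (n - r) I) x.
Proof.
move=> le_rn cardIJ r_min x le_xn.
have [le_x | lt_x] := leqP x (n - r).
  have := nbelow_rot I le_rn le_x; have := nbelow_rot J le_rn le_x.
  by have := r_min (r + x) ltac:(lia); lia.
have x_wrap : n - r <= x <= n by rewrite le_xn (ltnW lt_x).
have := nbelow_rot_wrap I le_rn x_wrap; have := nbelow_rot_wrap J le_rn x_wrap.
by have := r_min (x + r - n) ltac:(lia); lia.
Qed.

Lemma dominated_crossing_rot k I J (p q : 'I_n) : #|I| = k -> #|J| = k ->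
  (forall x, x <= n -> nbelow J x <= nbelow I x) ->
  p \in J :\: I -> q \in I :\: J -> val p < val q ->
  exists r, ~ noncrossing k (shiftset (n - r) I) (shiftset (n - r) J).
Proof.
move=> cardI cardJ dom p_JI q_IJ lt_pq.
have [s [t [s_JI t_IJ lt_st mid]]] := consecutive_differences p_JI q_IJ lt_pq.
have rise_s : nbelow J (val s) < nbelow I (val s).
  move: s_JI; rewrite inE => /andP[s_I s_J].
  by have := dom (val s).+1 (ltn_ord s); rewrite !nbelowS s_J (negbTE s_I); lia.
have [r lt_rs eq_r] := @nbelow_ivt I J (nbelow I (val s) - (nbelow J (val s)).+1) (val s)
  ltac:(lia).
exists r; apply: (valley_crossing_rot cardI cardJ s_JI t_IJ (ltnW lt_rs) lt_st mid).
lia.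
Qed.
End Valley.

Lemma shifts_noncrossing_weakly_separated k n (I J : {set 'I_n}) :
  inV k I -> inV k J -> shifts_noncrossing k I J -> weakly_separated I J.
Proof.
move=> /eqP cardI /eqP cardJ nc_IJ; apply/weakly_separatedP => il_IJ.
have n_gt0 : 0 < n by case: il_IJ => -[a _]; exact: ord_pos a.
have [r lt_rn r_min] := nbelow_argmin n_gt0 (etrans cardI (esym cardJ)).
have dom := rotation_dominates (ltnW lt_rn) (etrans cardI (esym cardJ)) r_min.
have [p [q [p_JI q_IJ lt_pq]]] : exists p q : 'I_n,
    [/\ p \in shiftset (n - r) J :\: shiftset (n - r) I,
        q \in shiftset (n - r) I :\: shiftset (n - r) J & val p < val q].
  case: (interleaved_shift (n - r) il_IJ); rewrite !shiftsetD;
    move=> -[a [b [c [d [? ? ? ? [? ? ?]]]]]]; [exists b, c | exists a, b]; by split.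
have [r' not_nc] := dominated_crossing_rot (etrans (card_shiftset _ _) cardI)
  (etrans (card_shiftset _ _) cardJ) dom p_JI q_IJ lt_pq.
by apply/not_nc/shifts_noncrossing_self/shifts_noncrossing_shift/shifts_noncrossing_shift.
Qed.

Lemma addn_subn_modn n j : 0 < n -> j + (n - j %% n) = 0 %[mod n].
Proof. by move=> n_gt0; rewrite -modnDml subnKC ?modnn ?mod0n // ltnW ?ltn_pmod. Qed.

Lemma weakly_separated_shift n j (I J : {set 'I_n}) :
  weakly_separated I J -> weakly_separated (shiftset j I) (shiftset j J).
Proof.
move=> /weakly_separatedP not_il; apply/weakly_separatedP; rewrite -!shiftsetD => il.
have n_gt0 : 0 < n by case: il => -[a _]; exact: ord_pos a.
apply: not_il; have := interleaved_shift (n - j %% n) il.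
by rewrite !shiftset_comp !shiftset_id // addn_subn_modn.
Qed.

Lemma shiftset_imset_id n m (F : {set {set 'I_n}}) : m = 0 %[mod n] ->
  [set shiftset m I | I in F] = F.
Proof. by move=> m0; rewrite -[RHS]imset_id; apply: eq_imset => I; exact: shiftset_id. Qed.

Lemma Sep_face_shifted_NC_face k n i (F : {set {set 'I_n}}) : i <= n ->
  Sep_face k F -> shifted_NC_face k i F.
Proof.
move=> le_in [F_V F_ws]; exists [set shiftset (n - i) I | I in F]; split; first split.
- by move=> _ /imsetP[I I_F ->]; rewrite /inV card_shiftset; exact: F_V.
- move=> _ _ /imsetP[I I_F ->] /imsetP[J J_F ->].
  apply: weakly_separated_noncrossing; last exact: weakly_separated_shift (F_ws _ _ I_F J_F).
    by rewrite /inV card_shiftset; apply: F_V.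
  by rewrite /inV card_shiftset; apply: F_V.
- rewrite -(imset_comp (shiftset i) (shiftset (n - i))) -[LHS]imset_id.
  by apply: eq_imset => I /=; rewrite shiftset_comp shiftset_id // subnK ?modnn ?mod0n.
Qed.

Lemma shifted_NC_faces_Sep_face k n (F : {set {set 'I_n}}) : 0 < n ->
  (forall i, 1 <= i <= n -> shifted_NC_face k i F) -> Sep_face k F.
Proof.
move=> n_gt0 NC_F.
have [G [[G_V _] F_G]] := NC_F n ltac:(by rewrite n_gt0 leqnn).
rewrite shiftset_imset_id ?modnn ?mod0n // in F_G; subst G.
split=> // I J I_F J_F; apply: shifts_noncrossing_weakly_separated; [exact: G_V | exact: G_V |].
move=> i /andP[i_gt0 le_in].
have i'_n : 1 <= n - i %% n <= n by rewrite leq_subr subn_gt0 ltn_pmod.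
have [G' [[_ G'_nc] F_G']] := NC_F _ i'_n.
move: I_F J_F; rewrite F_G' => /imsetP[I' I'_G ->] /imsetP[J' J'_G ->].
rewrite !shiftset_comp !shiftset_id ?(addnC _ i) ?addn_subn_modn //.
exact: G'_nc.
Qed.

Theorem proposition5p2 (k n : nat) (hk1 : (1 <= k)%N) (hkn : (k <= n - 1)%N) :
  (forall I J : {set 'I_n}, inV k I -> inV k J ->
     weakly_separated I J -> noncrossing k I J) /\
  (forall I J : {set 'I_n}, inV k I -> inV k J ->
     (forall i : nat, (1 <= i <= n)%N -> noncrossing k (shiftset i I) (shiftset i J)) ->
     weakly_separated I J) /\
  (forall F : {set {set 'I_n}},
     Sep_face k F <-> (forall i : nat, (1 <= i <= n)%N -> shifted_NC_face k i F)).
Proof.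
have n_gt0 : 0 < n by lia.
split; first exact: weakly_separated_noncrossing.
split; first exact: shifts_noncrossing_weakly_separated.
move=> F; split; last exact: shifted_NC_faces_Sep_face.
by move=> Sep_F i /andP[_ le_in]; apply: Sep_face_shifted_NC_face.
Qed.
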